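(* Let $n\in\mathbb{N}$, let $\lambda$ be a partition with at most $2n$ parts and $\mu\subseteq\lambda$ a partition with at most $n$ parts, and let $Q\in Rec_{2n}(\lambda/\mu)$, with associated chain of partitions $$\lambda=\mu^{(0)}\supseteq\mu^{(1)}\supseteq\cdots\supseteq\mu^{(N)}=\mu ,$$ where each $\mu^{(i-1)}/\mu^{(i)}$ is a vertical strip with $Q[i]$ cells. For $1\le i\le N$ let $t_0^{(i)}$ be the slack and $\mathbf{r}^{(i)}$ the slack vector of the strip $\mu^{(i-1)}/\mu^{(i)}$, and put $t_0^{(0)}:=0$, $\mathbf{r}^{(0)}:=()$. Then for each $1\le i\le N$: (a) $\ell(\mu^{(i-1)})=Q[i]+t_0^{(i)}\ge \ell(\mu^{(i)})$; (b) $0\le t_0^{(i-1)}\le t_0^{(i)}\le \ell(\mu^{(i)})\le \ell(\mu^{(i-1)})$; in particular the slack sequence $(t_0^{(N)},\dots,t_0^{(1)})$ is weakly decreasing and $(\ell(\mu^{(N)}),\dots,\ell(\mu^{(1)}),\ell(\mu^{(0)}))$ is weakly increasing; (c) $2n\ge Q[i]+2t_0^{(i)}=\ell(\mu^{(i-1)})+t_0^{(i)}$, equivalently $2n-t_0^{(i)}\ge Q[i]+t_0^{(i)}=\ell(\mu^{(i-1)})$; (d) $\mathbf{r}^{(i)}\le_{\mathbf{r}}\mathbf{r}^{(i-1)}$, so that the slack vector sequence satisfies $\mathbf{r}^{(N)}\le_{\mathbf{r}}\cdots\le_{\mathbf{r}}\mathbf{r}^{(1)}$; (e) $\mathbf{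r}^{(i)}\subseteq[1,\ell(\mu^{(i)})]\subseteq[1,\ell(\mu^{(i-1)})]\subseteq[1,2n-t_0^{(i)}]$.
   Context: Partitions $\gamma=(\gamma_1\ge\gamma_2\ge\cdots)$ are identified with Young diagrams (cells $(i,j)$, $1\le i\le\ell(\gamma)$, $1\le j\le\gamma_i$, matrix coordinates); $\ell(\gamma)$ is the number of nonzero parts. For $\alpha\subseteq\gamma$, $\gamma/\alpha$ is a vertical strip if it has at most one cell in each row. A partition $\nu$ is even if $\nu_{2i-1}=\nu_{2i}$ for all $i\ge1$. A semistandard tableau $T$ of skew shape $\lambda/\mu$ with entries in $[1,2n]$ is a filling of the cells of $\lambda/\mu$ weakly increasing along rows and strictly increasing down columns; set $T(a,b)=0$ for cells of $\mu$ and $T(a,b)=\infty$ for $(a,b)\notin\lambda$. Its weight is $(T[1],\dots,T[2n])$, $T[k]$ = number of entries equal to $k$. Its reverse column word is obtained by reading the columns from right to left, each column from top to bottom. A word is Yamanouchi if the weight of each of its prefixes is a partition. $T$ is a Littlewood–Richardson–Sundaram tableau if (1) its reverse column word is Yamanouchi, (2) its weight $\nu=(T[1],\dots,T[2n])$ is an even partition, and (3) $T(n+i,1)\ge 2i$ for every $i\ge0$. For such $T$ with weight $\nu$, let $N=\nu_1$. For $1\le k\le N$ let $J_k$ be the set of cells of $T$ containing the $k$-th occurrence (in the reverse column word) of some letter $j$ with $\nu_j\ge k$. Define $Q=\lozenge(T)$ as the filling of $\lambda/\mu$ with $Q(c)=k$ for $c\in J_k$. The set $Rec_{2n}(\lambda/\mu)$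 is the set of all such $Q$ as $T$ ranges over Littlewood–Richardson–Sundaram tableaux of shape $\lambda/\mu$. For $Q\in Rec_{2n}(\lambda/\mu)$, $Q[k]$ denotes the number of entries equal to $k$, $N$ its largest entry, and $\mu^{(k)}$ (for $0\le k\le N$) the partition whose diagram is $D(\mu)\cup\{c\in\lambda/\mu: Q(c)\ge k+1\}$; so $\mu^{(0)}=\lambda$, $\mu^{(N)}=\mu$, and $\mu^{(k-1)}/\mu^{(k)}$ is a vertical strip with $Q[k]$ cells, where $Q[k]\ge2$ is even and $(Q[1],\dots,Q[N])$ is the conjugate of an even partition. Slack data: for $1\le i\le N$, let $l_0^{(i)}$ be the number of cells of the strip $\mu^{(i-1)}/\mu^{(i)}$ lying in rows $1,\dots,\ell(\mu^{(i)})$; the slack is $t_0^{(i)}=\ell(\mu^{(i)})-l_0^{(i)}$, and the slack vector $\mathbf{r}^{(i)}=(r_1<\dots<r_{t_0^{(i)}})$ is the increasingly ordered set of row indices in $[1,\ell(\mu^{(i)})]$ containing no cell of $\mu^{(i-1)}/\mu^{(i)}$ (written $()$ when $t_0^{(i)}=0$). For $x\in\mathbb{Z}_{\ge0}^p$, $y\in\mathbb{Z}_{\ge0}^q$, write $x\le_{\mathbf{r}}y$ to mean $p\ge q\ge0$ and $x_j\le y_j$ whenever $y_j>0$ (in particular $x\le_{\mathbf{r}}()$ always). $[a,b]=\{a,a+1,\dots,b\}$. *)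

(* Partitions are seq nat (weakly decreasing, positive parts);
   cells are pairs (row, column), 1-indexed (matrix coordinates). *)
From mathcomp Require Import all_boot all_order all_algebra.
Set Implicit Arguments. Unset Strict Implicit. Unset Printing Implicit Defensive.
Import GRing.Theory Num.Theory.

Definition cell := (nat * nat)%type.

Definition is_partition (g : seq nat) : bool :=
  sorted geq g && all (fun x => 0 < x) g.

(* gamma_i, 1-indexed, 0 beyond the length *)
Definition part (g : seq nat) (i : nat) : nat := nth 0 g i.-1.

Definition subpart (a g : seq nat) : Prop := forall i, part a i <= part g i.

Definition in_diag (g : seq nat) (c : cell) : bool :=
  [&& 1 <= c.1, 1 <= c.2 & c.2 <= part g c.1].

Definition diag_cells (g : seq nat) : seq cell :=
  flatten [seq [seq (a, b) | b <- iota 1 (part g a)] | a <- iota 1 (size g)].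

Definition in_skew (lam mu : seq nat) (c : cell) : bool :=
  in_diag lam c && ~~ in_diag mu c.

Definition rcw_cells (lam mu : seq nat) : seq cell :=
  flatten [seq [seq (a, b) | a <- iota 1 (size lam) & in_skew lam mu (a, b)]
          | b <- rev (iota 1 (part lam 1))].

Definition filling := nat -> nat -> nat.

Definition tab (T : filling) (c : cell) : nat := T c.1 c.2.

Definition ssyt (n : nat) (lam mu : seq nat) (T : filling) : Prop :=
  [/\ forall c, in_skew lam mu c -> 1 <= tab T c <= 2 * n,
      forall a b, in_skew lam mu (a, b) -> in_skew lam mu (a, b.+1) ->
        T a b <= T a b.+1
    & forall a b, in_skew lam mu (a, b) -> in_skew lam mu (a.+1, b) ->
        T a b < T a.+1 b].

(* value of T with conventions: 0 on mu, infinity (None) outside lam *)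
Definition ext_val (lam mu : seq nat) (T : filling) (c : cell) : option nat :=
  if in_diag mu c then Some 0
  else if in_diag lam c then Some (tab T c) else None.

Definition rcw (lam mu : seq nat) (T : filling) : seq nat :=
  map (tab T) (rcw_cells lam mu).

Definition yamanouchi (w : seq nat) : Prop :=
  forall m k, 1 <= k -> count_mem k.+1 (take m w) <= count_mem k (take m w).

Definition wt (lam mu : seq nat) (T : filling) (k : nat) : nat :=
  count_mem k (rcw lam mu T).

Definition even_partition_weight (n : nat) (lam mu : seq nat) (T : filling) : Prop :=
  (forall k, 1 <= k < 2 * n -> wt lam mu T k.+1 <= wt lam mu T k) /\
  (forall i, 1 <= i <= n -> wt lam mu T (2 * i).-1 = wt lam mu T (2 * i)).

Definition lrs (n : nat) (lam mu : seq nat) (T : filling) : Prop :=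
  [/\ ssyt n lam mu T,
      yamanouchi (rcw lam mu T),
      even_partition_weight n lam mu T
    & forall i, match ext_val lam mu T (n + i, 1) with
                | Some v => 2 * i <= v
                | None => true
                end].

Definition occ (lam mu : seq nat) (T : filling) (c : cell) : nat :=
  count_mem (tab T c) (take (index c (rcw_cells lam mu)).+1 (rcw lam mu T)).

Definition inJ (lam mu : seq nat) (T : filling) (k : nat) (c : cell) : bool :=
  [&& in_skew lam mu c, k <= wt lam mu T (tab T c) & occ lam mu T c == k].

Definition is_diamond (lam mu : seq nat) (T Q : filling) : Prop :=
  forall c k, 1 <= k <= wt lam mu T 1 -> inJ lam mu T k c -> tab Q c = k.

Definition in_Rec (n : nat) (lam mu : seq nat) (Q : filling) : Prop :=
  exists T, lrs n lam mu T /\ is_diamond lam mu T Q.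

Definition Qcnt (lam mu : seq nat) (Q : filling) (k : nat) : nat :=
  count (fun c => in_skew lam mu c && (tab Q c == k)) (diag_cells lam).

Definition QN (lam mu : seq nat) (Q : filling) : nat :=
  \max_(c <- diag_cells lam | in_skew lam mu c) tab Q c.

(* diagram of mu^(k) = D(mu) ∪ {c in lam/mu : Q(c) >= k+1} *)
Definition mu_diag (lam mu : seq nat) (Q : filling) (k : nat) (c : cell) : bool :=
  in_diag mu c || (in_skew lam mu c && (k.+1 <= tab Q c)).

Definition ell_mu (lam mu : seq nat) (Q : filling) (k : nat) : nat :=
  \max_(c <- diag_cells lam | mu_diag lam mu Q k c) c.1.

Definition strip (lam mu : seq nat) (Q : filling) (i : nat) (c : cell) : bool :=
  mu_diag lam mu Q i.-1 c && ~~ mu_diag lam mu Q i c.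

Definition l0 (lam mu : seq nat) (Q : filling) (i : nat) : nat :=
  count (fun c => strip lam mu Q i c && (c.1 <= ell_mu lam mu Q i))
        (diag_cells lam).

Definition t0 (lam mu : seq nat) (Q : filling) (i : nat) : int :=
  if i == 0 then 0%R
  else ((ell_mu lam mu Q i)%:Z - (l0 lam mu Q i)%:Z)%R.

Definition rvec (lam mu : seq nat) (Q : filling) (i : nat) : seq nat :=
  if i == 0 then [::]
  else [seq a <- iota 1 (ell_mu lam mu Q i)
         | ~~ has (fun c => strip lam mu Q i c && (c.1 == a)) (diag_cells lam)].

Definition le_r (x y : seq nat) : Prop :=
  size y <= size x /\
  forall j, j < size y -> 0 < nth 0 y j -> nth 0 x j <= nth 0 y j.

(* By the definition of the diamond map, Q(c) is the occurrence number, in the reverse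
   column word, of the letter T(c) at c.  Semistandardness and the Yamanouchi property
   make this number strictly decrease along rows and weakly decrease down columns, so
   each mu^(k) is a Young diagram and the strip mu^(i-1)/mu^(i), the set of cells with
   occurrence number i, has at most one cell in each row and no repeated letter.  Hence
   Q[i] counts the rows of [1, ell(mu^(i-1))] met by the strip, and every row below
   ell(mu^(i)) is met since its first cell leaves mu^(i); this gives (a) and (b).
   The (i-1)-th occurrence of a letter lies weakly above its i-th occurrence, so among
   the first r rows the strip i-1 meets at least as many as the strip i; comparing the
   numbers of slack rows gives (d).  For (c), if L = ell(mu^(i-1)) > n then (L,1) lies
   outside mu, its letter x is at least 2(L-n) by the LRS condition on the first column,
   and each of the letters 1..x occurs at least i times, whence Q[i] >= x. *)

From Pilot Require Import Defs.
From mathcomp Require Import all_boot all_order all_algebra zify.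
Import GRing.Theory Num.Theory.

Lemma count_take_leq {T : Type} (P : pred T) (s : seq T) p q :
  p <= q -> count P (take p s) <= count P (take q s).
Proof. by move=> le_pq; rewrite -(subnKC le_pq) takeD count_cat leq_addr. Qed.

Lemma count_takeS {T : Type} (x0 : T) (P : pred T) (s : seq T) p :
  p < size s -> count P (take p.+1 s) = count P (take p s) + P (nth x0 s p).
Proof. by move=> lt_ps; rewrite (take_nth x0 lt_ps) -cats1 count_cat /= addn0. Qed.

Lemma yamanouchi_count_leq {w : seq nat} {m x y : nat} : yamanouchi w -> 1 <= x <= y ->
  count_mem y (take m w) <= count_mem x (take m w).
Proof.
move=> yam /andP[x_gt0 le_xy]; rewrite -(subnKC le_xy).
elim: (y - x) => [|d IHd]; first by rewrite addn0.
by apply: leq_trans IHd; rewrite addnS; apply: yam; lia.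
Qed.

Lemma kth_occurrence (w : seq nat) x k : 1 <= k <= count_mem x w ->
  exists2 p, p < size w & nth 0 w p = x /\ count_mem x (take p.+1 w) = k.
Proof.
move=> /andP[k_gt0 le_k].
have [|m km min_m] := ex_minnP (P := fun m => k <= count_mem x (take m w)).
  by exists (size w); rewrite take_size.
have m_gt0 : 0 < m by case: m km {min_m} => //; rewrite take0 /=; lia.
have le_m : m <= size w by apply: min_m; rewrite take_size.
have lt_pm : ~~ (k <= count_mem x (take m.-1 w)).
  by apply/negP => /min_m; rewrite -ltnS prednK // ltnn.
exists m.-1; first by rewrite prednK.
move: km; rewrite -(prednK m_gt0) (count_takeS 0) ?prednK //.
by case: (nth 0 w m.-1 =P x) lt_pm => /= [-> |_]; lia.
Qed.

Lemma count_injective_key {T : eqType} (key : T -> nat) (P : pred T) (s : seq T) m :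
  uniq s -> {in [pred c in s | P c] &, injective key} ->
  (forall c, c \in s -> P c -> 0 < key c) ->
  count (fun c => P c && (key c <= m)) s =
  count (fun a => has (fun c => P c && (key c == a)) s) (iota 1 m).
Proof.
move=> uniq_s inj_key key_gt0; rewrite -!size_filter -(size_map key).
apply/perm_size/uniq_perm; rewrite ?filter_uniq ?iota_uniq //.
  rewrite map_inj_in_uniq ?filter_uniq // => c d.
  rewrite !mem_filter => /andP[/andP[Pc _] cs] /andP[/andP[Pd _] ds].
  by apply: inj_key; rewrite inE ?cs ?ds.
move=> a; rewrite mem_filter mem_iota.
apply/mapP/andP => [[c]|[/hasP[c cs /andP[Pc /eqP <-]] le_am]].
  rewrite mem_filter => /andP[/andP[Pc le_cm] cs] ->.
  by split; [apply/hasP; exists c; rewrite ?Pc ?eqxx | have := key_gt0 c cs Pc; lia].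
by exists c; rewrite // mem_filter Pc cs /=; lia.
Qed.

Lemma bigmax_seq_attained {I : eqType} {r : seq I} {P : pred I} {F : I -> nat} :
  0 < \max_(i <- r | P i) F i ->
  exists2 i, i \in r & P i && (F i == \max_(i <- r | P i) F i).
Proof.
elim: r => [|x r IHr]; first by rewrite big_nil.
rewrite big_cons; case: ifP => Px.
  case: (leqP (F x) (\max_(i <- r | P i) F i)) => [le_x|lt_x].
    by case/IHr => i ir Pi; exists i; rewrite ?inE ?ir ?orbT.
  by exists x; rewrite ?mem_head // Px eqxx.
by case/IHr => i ir Pi; exists i; rewrite ?inE ?ir ?orbT.
Qed.

Lemma sorted_count_leq_nth (s : seq nat) j : sorted leq s -> j < size s ->
  j < count (fun x => x <= nth 0 s j) s.
Proof.
elim: s j => [|x s IHs] [|j] //= sorted_xs; first by rewrite leqnn.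
have le_xs := order_path_min leq_trans sorted_xs.
rewrite ltnS => lt_js; rewrite (all_nthP 0 le_xs) //= add1n ltnS.
exact: IHs (path_sorted sorted_xs) lt_js.
Qed.

Lemma sorted_nth_leq (s : seq nat) y j : sorted leq s ->
  j < count (fun x => x <= y) s -> nth 0 s j <= y.
Proof.
elim: s j => [|x s IHs] j //= sorted_xs.
have le_xs := order_path_min leq_trans sorted_xs.
case: (leqP x y) => [le_xy|lt_yx].
  by case: j => [//|j]; rewrite add1n ltnS; apply: IHs (path_sorted sorted_xs).
rewrite add0n (eq_in_count (a2 := pred0)) ?count_pred0 // => z zs.
by apply/negbTE; rewrite -ltnNge (leq_trans lt_yx) ?(allP le_xs).
Qed.

Lemma le_r_count (R R' : seq nat) : sorted leq R -> sorted leq R' ->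
  (forall y, count (fun x => x <= y) R' <= count (fun x => x <= y) R) -> le_r R R'.
Proof.
move=> sorted_R sorted_R' le_count; split => [|j lt_j _].
  apply: leq_trans (count_size (fun x => x <= sumn R') R).
  apply: leq_trans (le_count _); rewrite (eq_in_count (a2 := predT)) ?count_predT //.
  by elim: (R') => //= x s IHs z; rewrite inE => /predU1P[->|/IHs]; lia.
apply: sorted_nth_leq => //; apply: leq_trans (le_count _).
exact: sorted_count_leq_nth.
Qed.

Lemma part_mono g i j : is_partition g -> 1 <= i <= j -> part g j <= part g i.
Proof.
move=> /andP[sorted_g _] /andP[i_gt0 le_ij]; rewrite /part.
case: (ltnP j.-1 (size g)) => [lt_j|]; last by move=> ?; rewrite nth_default.
apply: (sorted_leq_nth (fun _ _ _ h1 h2 => leq_trans h2 h1) leqnn) => //; rewrite ?inE; lia.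
Qed.

Lemma part_default g i : size g < i -> part g i = 0.
Proof. by move=> lt_gi; rewrite /part nth_default //; lia. Qed.

Lemma in_diag_row {g : seq nat} {c : cell} : in_diag g c -> 1 <= c.1 <= size g.
Proof.
case: c => a b /and3P[/= a_gt0 b_gt0 le_b]; rewrite a_gt0 leqNgt; apply/negP => lt_ga.
by move: le_b; rewrite part_default //; lia.
Qed.

Lemma mem_diag_cells g c : (c \in diag_cells g) = in_diag g c.
Proof.
apply/allpairsPdep/idP => [[a [b [+ + ->]]]|c_in].
  by rewrite !mem_iota /in_diag /=; lia.
have /andP[a_gt0 le_a] := in_diag_row c_in.
case: c c_in a_gt0 le_a => a b /and3P[_ /= b_gt0 le_b] a_gt0 le_a.
by exists a, b; rewrite !mem_iota; split => //; lia.
Qed.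

Lemma uniq_diag_cells g : uniq (diag_cells g).
Proof.
apply: allpairs_uniq_dep => [|a _|]; rewrite ?iota_uniq //.
by move=> [a b] [a' b'] _ _ /= [-> ->].
Qed.

Definition rcw_before (c d : cell) : bool :=
  (d.2 < c.2) || ((c.2 == d.2) && (c.1 < d.1)).

Lemma mem_rcw_cells lam mu c : is_partition lam ->
  (c \in rcw_cells lam mu) = in_skew lam mu c.
Proof.
move=> plam; apply/allpairsPdep/idP => [[b [a [_ + ->]]]|c_skew].
  by rewrite mem_filter => /andP[].
have /andP[a_gt0 le_a] := in_diag_row (andP c_skew).1.
case: c c_skew a_gt0 le_a => a b c_skew /= a_gt0 le_a.
have /and3P[_ /= b_gt0 le_b] := (andP c_skew).1.
have : part lam a <= part lam 1 by apply: part_mono; rewrite // a_gt0.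
by exists b, a; rewrite mem_rev mem_filter c_skew !mem_iota; split => //; lia.
Qed.

Lemma pairwise_rcw_before lam mu : pairwise rcw_before (rcw_cells lam mu).
Proof.
have : pairwise (fun b b' => b' < b) (rev (iota 1 (part lam 1))).
  rewrite -sorted_pairwise; last by move=> ? ? ? /[swap]; apply: ltn_trans.
  by rewrite rev_sorted iota_ltn_sorted.
rewrite /rcw_cells; elim: (rev _) => //= b bs IHbs /andP[lt_bs pairwise_bs].
rewrite pairwise_cat IHbs // andbT; apply/andP; split.
  apply/allrelP => _ _ /mapP[a _ ->] /allpairsPdep[b' [a' [b'_in _ ->]]].
  by rewrite /rcw_before /= (allP lt_bs).
rewrite pairwise_map; apply: pairwise_filter.
have : pairwise ltn (iota 1 (size lam)).
  by rewrite -sorted_pairwise ?iota_ltn_sorted //; apply: ltn_trans.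
by apply: sub_pairwise => a a'; rewrite /rcw_before /= ltnn eqxx.
Qed.

Lemma uniq_rcw_cells lam mu : uniq (rcw_cells lam mu).
Proof.
apply: pairwise_uniq (pairwise_rcw_before lam mu).
by move=> c; rewrite /rcw_before !ltnn eqxx.
Qed.

Lemma rcw_index_ltn {lam mu : seq nat} {c d : cell} :
  c \in rcw_cells lam mu -> d \in rcw_cells lam mu ->
  (index c (rcw_cells lam mu) < index d (rcw_cells lam mu)) = rcw_before c d.
Proof.
set s := rcw_cells lam mu => cs ds.
have before_of_ltn x y : x \in s -> y \in s -> index x s < index y s -> rcw_before x y.
  move=> xs ys lt_xy; have /(pairwiseP (0, 0)) := pairwise_rcw_before lam mu.
  by move/(_ (index x s) (index y s)); rewrite !inE !index_mem !nth_index //; apply.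
apply/idP/idP => [|before_cd]; first exact: before_of_ltn.
case: ltngtP => // [lt_dc|eq_cd].
  move: before_cd (before_of_ltn d c ds cs lt_dc); rewrite /rcw_before.
  by case: (ltngtP c.2 d.2) => //=; lia.
move: before_cd; rewrite -(nth_index (0, 0) cs) eq_cd nth_index //.
by rewrite /rcw_before !ltnn eqxx.
Qed.

Lemma rcw_index_below {lam mu : seq nat} {a b : nat} : is_partition lam ->
  in_skew lam mu (a, b) -> in_skew lam mu (a.+1, b) ->
  index (a.+1, b) (rcw_cells lam mu) = (index (a, b) (rcw_cells lam mu)).+1.
Proof.
move=> plam ab_skew Sab_skew; rewrite -!mem_rcw_cells // in ab_skew Sab_skew.
have := rcw_index_ltn ab_skew Sab_skew; rewrite /rcw_before /= ltnn eqxx ltnSn leq_eqVlt.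
move=> /predU1P[<- //|lt_ab].
set p := (index (a, b) _).+1 in lt_ab.
have lt_p : p < size (rcw_cells lam mu) by rewrite (ltn_trans lt_ab) ?index_mem.
have p_in : nth (0, 0) (rcw_cells lam mu) p \in rcw_cells lam mu by rewrite mem_nth.
have p_index : index (nth (0, 0) (rcw_cells lam mu) p) (rcw_cells lam mu) = p.
  by rewrite index_uniq ?uniq_rcw_cells.
have := rcw_index_ltn ab_skew p_in; have := rcw_index_ltn p_in Sab_skew.
rewrite p_index ltnSn lt_ab; case: (nth _ _ p) => a' b'.
by rewrite /rcw_before /=; case: ltngtP => //=; lia.
Qed.

Lemma in_skew_row {lam mu : seq nat} {a b b' k : nat} :
  in_skew lam mu (a, b) -> in_skew lam mu (a, b') -> b <= k <= b' -> in_skew lam mu (a, k).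
Proof.
rewrite /in_skew /in_diag /=.
move=> /andP[/and3P[a_gt0 b_gt0 _] not_mu] /andP[/and3P[_ _ le_b'] _] le_bk.
by rewrite a_gt0; apply/andP; split; [lia | apply: contra not_mu; lia].
Qed.

Lemma in_skew_col {lam mu : seq nat} {a a' b k : nat} :
  is_partition lam -> is_partition mu ->
  in_skew lam mu (a, b) -> in_skew lam mu (a', b) -> a <= k <= a' -> in_skew lam mu (k, b).
Proof.
move=> plam pmu; rewrite /in_skew /in_diag /=.
move=> /andP[/and3P[a_gt0 b_gt0 _] not_mu] /andP[/and3P[_ _ le_b] _] le_ak.
have : part lam a' <= part lam k by apply: part_mono; lia.
have : part mu k <= part mu a by apply: part_mono; lia.
by rewrite b_gt0; move=> *; apply/andP; split; [lia | apply: contra not_mu; lia].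
Qed.

Lemma in_skew_corner {lam mu : seq nat} {a a' b b' : nat} : is_partition lam ->
  in_skew lam mu (a, b) -> in_skew lam mu (a', b') -> a <= a' -> b <= b' ->
  in_skew lam mu (a, b').
Proof.
move=> plam; rewrite /in_skew /in_diag /=.
move=> /andP[/and3P[a_gt0 b_gt0 _] not_mu] /andP[/and3P[_ _ le_b'] _] le_aa' le_bb'.
have : part lam a' <= part lam a by apply: part_mono; lia.
by rewrite a_gt0; move=> *; apply/andP; split; [lia | apply: contra not_mu; lia].
Qed.

Lemma row_leq_ell_mu lam mu Q k c : c \in diag_cells lam -> mu_diag lam mu Q k c ->
  c.1 <= ell_mu lam mu Q k.
Proof. exact: (leq_bigmax_seq c). Qed.

Lemma ell_mu_leq_pred lam mu Q k : ell_mu lam mu Q k <= ell_mu lam mu Q k.-1.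
Proof.
case: k => [//|k]; apply/bigmax_leqP_seq => c c_in /orP[c_mu|/andP[c_skew lt_kQ]].
  by apply: row_leq_ell_mu; rewrite // /mu_diag c_mu.
by apply: row_leq_ell_mu; rewrite // /mu_diag c_skew (ltnW lt_kQ) orbT.
Qed.

Definition strip_row lam mu Q i a : bool :=
  has (fun c => strip lam mu Q i c && (c.1 == a)) (diag_cells lam).

Section LRS.

Context {n : nat} {lam mu : seq nat} {T Q : filling}.
Hypotheses (plam : is_partition lam) (pmu : is_partition mu).
Hypotheses (ssT : ssyt n lam mu T) (yamT : yamanouchi (rcw lam mu T)).

Local Notation cells := (rcw_cells lam mu).
Local Notation word := (rcw lam mu T).
Local Notation occ := (occ lam mu T).
Local Notation wt := (wt lam mu T).

Lemma tab_range {c : cell} : in_skew lam mu c -> 1 <= tab T c <= 2 * n.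
Proof. by case: ssT => tab_range _ _; apply: tab_range. Qed.

Lemma ssyt_row_leq {a b b' : nat} : in_skew lam mu (a, b) -> in_skew lam mu (a, b') ->
  b <= b' -> T a b <= T a b'.
Proof.
have [_ row_leq _] := ssT; move=> ab_skew + le_bb'; rewrite -(subnKC le_bb').
elim: (b' - b) => [|d IHd] skew_d; first by rewrite addn0.
have skew_d' : in_skew lam mu (a, b + d) by apply: in_skew_row ab_skew skew_d _; lia.
by apply: leq_trans (IHd skew_d') _; rewrite addnS row_leq // -addnS.
Qed.

Lemma ssyt_col_ltn {a a' b : nat} : in_skew lam mu (a, b) -> in_skew lam mu (a', b) ->
  a < a' -> T a b < T a' b.
Proof.
have [_ _ col_ltn] := ssT; move=> ab_skew + lt_aa'; rewrite -(subnKC lt_aa').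
elim: (a' - a.+1) => [|d IHd] skew_d; first by rewrite addn0 in skew_d *; apply: col_ltn.
have skew_d' : in_skew lam mu (a.+1 + d, b) by apply: in_skew_col ab_skew skew_d _; lia.
by apply: ltn_trans (IHd skew_d') _; rewrite addnS col_ltn // -addnS.
Qed.

Lemma nth_rcw_index {c : cell} : c \in cells -> nth 0 word (index c cells) = tab T c.
Proof. by move=> c_in; rewrite (nth_map (0, 0)) ?index_mem ?nth_index. Qed.

Lemma occE {c : cell} : c \in cells ->
  occ c = (count_mem (tab T c) (take (index c cells) word)).+1.
Proof.
move=> c_in; rewrite /Defs.occ (count_takeS 0) ?size_map ?index_mem //.
by rewrite nth_rcw_index // /= eqxx addn1.
Qed.

Lemma occ_bounds {c : cell} : c \in cells -> 1 <= occ c <= wt (tab T c).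
Proof.
move=> c_in; rewrite {1}occE //= /Defs.occ /wt.
by rewrite -{2}(cat_take_drop (index c cells).+1 word) count_cat leq_addr.
Qed.

Lemma occ_ltn_index {c d : cell} : c \in cells -> d \in cells -> tab T c = tab T d ->
  index c cells < index d cells -> occ c < occ d.
Proof.
move=> c_in d_in eq_cd lt_cd; rewrite (occE d_in) ltnS -eq_cd /Defs.occ.
exact: count_take_leq.
Qed.

Lemma occ_inj {c d : cell} : c \in cells -> d \in cells -> tab T c = tab T d ->
  occ c = occ d -> c = d.
Proof.
move=> c_in d_in eq_cd eq_occ.
case: (ltngtP (index c cells) (index d cells)) => [lt_cd|lt_dc|].
- by have := occ_ltn_index c_in d_in eq_cd lt_cd; rewrite eq_occ ltnn.
- by have := occ_ltn_index d_in c_in (esym eq_cd) lt_dc; rewrite eq_occ ltnn.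
- by move=> eq_index; rewrite -(nth_index (0, 0) c_in) eq_index nth_index.
Qed.

Lemma occ_exists x k : 1 <= k <= wt x ->
  exists2 c, in_skew lam mu c & tab T c = x /\ occ c = k.
Proof.
move=> /kth_occurrence[p]; rewrite size_map => lt_p [word_p count_p].
have p_index : index (nth (0, 0) cells p) cells = p by rewrite index_uniq ?uniq_rcw_cells.
exists (nth (0, 0) cells p); first by rewrite -mem_rcw_cells ?mem_nth.
by rewrite -word_p (nth_map (0, 0)) // /Defs.occ p_index -(nth_map (0, 0) 0) // word_p.
Qed.

Lemma occ_row_ltn {a b b' : nat} : in_skew lam mu (a, b) -> in_skew lam mu (a, b') ->
  b < b' -> occ (a, b') < occ (a, b).
Proof.
move=> ab_skew ab'_skew lt_bb'.
have [ab_in ab'_in] : (a, b) \in cells /\ (a, b') \in cells by rewrite !mem_rcw_cells.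
have lt_index : index (a, b') cells < index (a, b) cells.
  by rewrite rcw_index_ltn // /rcw_before /= lt_bb'.
have /andP[x_gt0 _] := tab_range ab_skew.
rewrite (occE ab_in) ltnS /Defs.occ.
apply: leq_trans (yamanouchi_count_leq yamT _) _; last exact: count_take_leq.
by rewrite x_gt0 ssyt_row_leq // ltnW.
Qed.

Lemma occ_col_leq {a b : nat} : in_skew lam mu (a, b) -> in_skew lam mu (a.+1, b) ->
  occ (a.+1, b) <= occ (a, b).
Proof.
move=> ab_skew Sab_skew; have ab_in : (a, b) \in cells by rewrite mem_rcw_cells.
have lt_xy := ssyt_col_ltn ab_skew Sab_skew (ltnSn a).
have /andP[x_gt0 _] := tab_range ab_skew.
have idx_below := rcw_index_below plam ab_skew Sab_skew.
have lt_idx : (index (a, b) cells).+1 < size word.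
  by rewrite size_map -idx_below index_mem mem_rcw_cells.
rewrite /Defs.occ idx_below.
apply: leq_trans (yamanouchi_count_leq (x := T a b) yamT _) _; first by rewrite x_gt0 ltnW.
rewrite (count_takeS 0 _ _ _ lt_idx) -idx_below nth_rcw_index ?mem_rcw_cells //=.
by rewrite eq_sym (ltn_eqF lt_xy) addn0.
Qed.

Lemma same_letter_row_leq c d : in_skew lam mu c -> in_skew lam mu d ->
  tab T c = tab T d -> occ d < occ c -> d.1 <= c.1.
Proof.
move=> c_skew d_skew eq_cd lt_occ.
have [c_in d_in] : c \in cells /\ d \in cells by rewrite !mem_rcw_cells.
have : index d cells < index c cells.
  case: ltngtP => // [lt_cd|eq_idx].
    by have := occ_ltn_index c_in d_in eq_cd lt_cd; lia.
  by move: lt_occ; rewrite -(nth_index (0, 0) c_in) -eq_idx nth_index // ltnn.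
rewrite rcw_index_ltn // /rcw_before; case: (ltngtP c.2 d.2) => //= [lt_cd2 _|_ /ltnW //].
case: c d {c_in d_in lt_occ} c_skew d_skew eq_cd lt_cd2 => a b [a' b'] /= ab_skew a'b'_skew.
rewrite /tab /= => eq_cd lt_bb'; rewrite leqNgt; apply/negP => lt_aa'.
have ab'_skew := in_skew_corner plam ab_skew a'b'_skew (ltnW lt_aa') (ltnW lt_bb').
have := ssyt_col_ltn ab'_skew a'b'_skew lt_aa'.
by rewrite -eq_cd ltnNge ssyt_row_leq // ltnW.
Qed.

Hypothesis wtT : even_partition_weight n lam mu T.
Hypothesis col1T : forall i, match ext_val lam mu T (n + i, 1) with
                            | Some v => 2 * i <= v
                            | None => true
                            end.
Hypothesis diamondQ : is_diamond lam mu T Q.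

Local Notation mu_diag := (mu_diag lam mu Q).
Local Notation ell := (ell_mu lam mu Q).
Local Notation strip := (strip lam mu Q).
Local Notation strip_row := (strip_row lam mu Q).
Local Notation l0 := (l0 lam mu Q).
Local Notation Qcnt := (Qcnt lam mu Q).

Lemma wt_mono x y : 1 <= y <= x -> x <= 2 * n -> wt x <= wt y.
Proof.
case: wtT => wt_succ _ /andP[y_gt0 le_yx]; rewrite -(subnKC le_yx).
elim: (x - y) => [|d IHd] le_d2n; first by rewrite addn0.
by apply: leq_trans (IHd _) ; rewrite ?addnS ?wt_succ //; lia.
Qed.

Lemma tabQ_occ c : in_skew lam mu c -> tab Q c = occ c.
Proof.
move=> c_skew; have c_in : c \in rcw_cells lam mu by rewrite mem_rcw_cells.
have /andP[occ_gt0 le_occ] := occ_bounds c_in.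
have /andP[x_gt0 le_x] := tab_range c_skew.
apply: diamondQ; last by rewrite /inJ c_skew le_occ eqxx.
by rewrite occ_gt0 (leq_trans le_occ) ?wt_mono.
Qed.

Lemma mu_diag_left {k a b b' : nat} : in_diag lam (a, b) -> mu_diag k (a, b) ->
  1 <= b' <= b -> mu_diag k (a, b').
Proof.
move=> ab_lam ab_mu /andP[b'_gt0 le_b'b].
have ab'_lam : in_diag lam (a, b') by move: ab_lam; rewrite /in_diag /=; lia.
move: ab_mu; rewrite /Defs.mu_diag /in_skew ab'_lam.
case/orP=> [ab_mu|/andP[/andP[_ ab_notmu] lt_kQ]].
  move: ab_mu; rewrite /in_diag /= => /and3P[-> _ le_b].
  by rewrite b'_gt0 (leq_trans le_b'b le_b).
case: (boolP (in_diag mu (a, b'))) => //= ab'_notmu.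
have ab'_skew : in_skew lam mu (a, b') by rewrite /in_skew ab'_lam.
rewrite (leq_trans lt_kQ) // !tabQ_occ //; last by rewrite /in_skew ab_lam.
move: le_b'b; rewrite leq_eqVlt => /predU1P[-> //|lt_b'b].
by rewrite ltnW // occ_row_ltn // /in_skew ab_lam.
Qed.

Lemma mu_diag_up {k a b : nat} : 1 <= a -> in_diag lam (a.+1, b) -> mu_diag k (a.+1, b) ->
  in_diag lam (a, b) && mu_diag k (a, b).
Proof.
move=> a_gt0 Sab_lam Sab_mu.
have ab_lam : in_diag lam (a, b).
  have : part lam a.+1 <= part lam a by apply: part_mono; lia.
  by move: Sab_lam; rewrite /in_diag /=; lia.
rewrite ab_lam; move: Sab_mu; rewrite /Defs.mu_diag /in_skew ab_lam.
case/orP=> [Sab_mu|/andP[/andP[_ Sab_notmu] lt_kQ]].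
  have le_mu : part mu a.+1 <= part mu a by apply: part_mono; lia.
  move: Sab_mu; rewrite /in_diag => /and3P[_ /= b_gt0 le_b].
  by rewrite /= a_gt0 b_gt0 (leq_trans le_b le_mu).
case: (boolP (in_diag mu (a, b))) => //= ab_notmu.
have ab_skew : in_skew lam mu (a, b) by rewrite /in_skew ab_lam.
have Sab_skew : in_skew lam mu (a.+1, b) by rewrite /in_skew Sab_lam.
by rewrite (leq_trans lt_kQ) // !tabQ_occ // occ_col_leq.
Qed.

Lemma mu_diag_first_column {k r : nat} :
  1 <= r <= ell k -> in_diag lam (r, 1) && mu_diag k (r, 1).
Proof.
move=> /andP[r_gt0 le_r].
have [[a b] c_in /andP[ab_mu /eqP /= a_ell]] := bigmax_seq_attained (leq_trans r_gt0 le_r).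
have ab_lam : in_diag lam (a, b) by rewrite -mem_diag_cells.
have a1_lam : in_diag lam (a, 1) by move: ab_lam; rewrite /in_diag /=; lia.
have a1_mu : mu_diag k (a, 1).
  by apply: (mu_diag_left ab_lam ab_mu); move: ab_lam; rewrite /in_diag /=; lia.
have : r <= a by rewrite a_ell.
elim: a {b c_in ab_mu a_ell ab_lam} a1_lam a1_mu => [|a IHa] a1_lam a1_mu.
  by rewrite leqn0 => /eqP r0; rewrite r0 in r_gt0.
rewrite leq_eqVlt => /predU1P[-> |le_ra]; first by rewrite a1_lam.
have a_gt0 : 0 < a by lia.
by have /andP[a_lam a_mu] := mu_diag_up a_gt0 a1_lam a1_mu; apply: IHa.
Qed.

Lemma strip_occ i c : 1 <= i -> c \in diag_cells lam ->
  strip i c = in_skew lam mu c && (occ c == i).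
Proof.
move=> i_gt0; rewrite mem_diag_cells => c_lam.
rewrite /Defs.strip /Defs.mu_diag /in_skew c_lam /=.
case: (boolP (in_diag mu c)) => //= c_notmu.
by rewrite tabQ_occ ?prednK ?/in_skew ?c_lam // -leqNgt -eqn_leq eq_sym.
Qed.

Lemma strip_row_inj {i : nat} {c d : cell} : 1 <= i ->
  c \in diag_cells lam -> d \in diag_cells lam -> strip i c -> strip i d -> c.1 = d.1 -> c = d.
Proof.
move=> i_gt0 c_in d_in; rewrite !strip_occ //.
move=> /andP[c_skew /eqP c_occ] /andP[d_skew /eqP d_occ].
case: c d c_skew d_skew c_occ d_occ {c_in d_in} => a b [a' b'] /= + + + + eq_aa'.
rewrite -{}eq_aa' => ab_skew ab'_skew ab_occ ab'_occ.
case: (ltngtP b b') => [lt_bb'|lt_b'b|-> //].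
  by have := occ_row_ltn ab_skew ab'_skew lt_bb'; rewrite ab_occ ab'_occ ltnn.
by have := occ_row_ltn ab'_skew ab_skew lt_b'b; rewrite ab_occ ab'_occ ltnn.
Qed.

Lemma count_strip_rows i s : 1 <= i ->
  count (fun c => strip i c && (c.1 <= s)) (diag_cells lam) = count (strip_row i) (iota 1 s).
Proof.
move=> i_gt0; apply: count_injective_key; first exact: uniq_diag_cells.
  move=> c d; rewrite !inE => /andP[c_in c_strip] /andP[d_in d_strip].
  exact: strip_row_inj i_gt0 c_in d_in c_strip d_strip.
by move=> c; rewrite mem_diag_cells => /in_diag_row /andP[].
Qed.

Lemma strip_row_gap i a : 1 <= i -> ell i < a <= ell i.-1 -> strip_row i a.
Proof.
move=> i_gt0 /andP[lt_ell_a le_a].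
have /andP[a1_lam a1_mu] : in_diag lam (a, 1) && mu_diag i.-1 (a, 1).
  by apply: mu_diag_first_column; rewrite le_a andbT; apply: leq_ltn_trans lt_ell_a.
apply/hasP; exists (a, 1); first by rewrite mem_diag_cells.
rewrite /Defs.strip a1_mu eqxx andbT /=; apply/negP => /(row_leq_ell_mu _ _) a1_ell.
by move: lt_ell_a; rewrite ltnNge a1_ell // mem_diag_cells.
Qed.

Lemma strip_leq_ell_pred i c : c \in diag_cells lam -> strip i c -> c.1 <= ell i.-1.
Proof. by move=> c_in /andP[c_mu _]; apply: row_leq_ell_mu. Qed.

Lemma Qcnt_strip i : 1 <= i -> Qcnt i = count (strip i) (diag_cells lam).
Proof.
move=> i_gt0; apply: eq_in_count => c c_in /=.
by rewrite strip_occ //; case: (boolP (in_skew lam mu c)) => //= c_skew; rewrite tabQ_occ.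
Qed.

Lemma l0_strip_rows i : 1 <= i -> l0 i = count (strip_row i) (iota 1 (ell i)).
Proof. exact: count_strip_rows. Qed.

Lemma l0_leq_ell i : 1 <= i -> l0 i <= ell i.
Proof. by move=> i_gt0; rewrite l0_strip_rows // (leq_trans (count_size _ _)) ?size_iota. Qed.

Lemma count_strip_rows_gap {i t : nat} : 1 <= i -> ell i <= t <= ell i.-1 ->
  count (strip_row i) (iota 1 t) = count (strip_row i) (iota 1 (ell i)) + (t - ell i).
Proof.
move=> i_gt0 /andP[le_t t_le]; rewrite -{1}(subnKC le_t) iotaD count_cat; congr (_ + _).
rewrite (eq_in_count (a2 := predT)) ?count_predT ?size_iota // => a.
by rewrite mem_iota => le_a; apply: strip_row_gap => //; lia.
Qed.

Lemma Qcnt_eq i : 1 <= i -> Qcnt i = l0 i + (ell i.-1 - ell i).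
Proof.
move=> i_gt0; have le_ell := ell_mu_leq_pred lam mu Q i.
rewrite Qcnt_strip // l0_strip_rows //.
rewrite (eq_in_count (a2 := fun c => strip i c && (c.1 <= ell i.-1))); last first.
  by move=> c c_in /=; case: (boolP (strip i c)) => //= c_strip; rewrite strip_leq_ell_pred.
by rewrite count_strip_rows // count_strip_rows_gap // le_ell leqnn.
Qed.

Lemma count_strip_letters i (P : pred cell) m : 1 <= i ->
  count (fun c => (strip i c && P c) && (tab T c <= m)) (diag_cells lam) =
  count (fun y => has (fun c => (strip i c && P c) && (tab T c == y)) (diag_cells lam))
        (iota 1 m).
Proof.
move=> i_gt0; apply: count_injective_key; first exact: uniq_diag_cells.
  move=> c d; rewrite !inE => /and3P[c_in c_strip _] /and3P[d_in d_strip _] eq_cd.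
  move: c_strip d_strip; rewrite !strip_occ //.
  move=> /andP[c_skew /eqP c_occ] /andP[d_skew /eqP d_occ].
  by apply: occ_inj; rewrite ?mem_rcw_cells ?c_occ ?d_occ.
move=> c c_in /andP[]; rewrite strip_occ // => /andP[c_skew _] _.
by case/andP: (tab_range c_skew).
Qed.

Lemma leq_letter_Qcnt {i x : nat} : 1 <= i -> 1 <= x <= 2 * n -> i <= wt x -> x <= Qcnt i.
Proof.
move=> i_gt0 /andP[x_gt0 le_x] le_i; rewrite Qcnt_strip //.
apply: (@leq_trans (count (fun c => (strip i c && true) && (tab T c <= x)) (diag_cells lam))).
  rewrite count_strip_letters // (eq_in_count (a2 := predT)) ?count_predT ?size_iota // => y.
  rewrite mem_iota => /andP[y_gt0 lt_y].
  have [|c c_skew [c_y c_occ]] := occ_exists y i.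
    by rewrite i_gt0 (leq_trans le_i) // wt_mono //; lia.
  have c_in : c \in diag_cells lam by rewrite mem_diag_cells; case/andP: c_skew.
  by apply/hasP; exists c; rewrite // strip_occ // c_skew c_occ c_y !eqxx.
by apply: sub_count => c /andP[/andP[]].
Qed.

Lemma ell_pred_leq_Qcnt i : size mu <= n -> 1 <= i -> 2 * ell i.-1 <= 2 * n + Qcnt i.
Proof.
move=> le_mu i_gt0; case: (leqP (ell i.-1) n) => [|lt_nL]; first lia.
have /andP[L1_lam L1_mu] : in_diag lam (ell i.-1, 1) && mu_diag i.-1 (ell i.-1, 1).
  by apply: mu_diag_first_column; rewrite leqnn andbT; apply: leq_ltn_trans lt_nL.
set L := ell i.-1 in lt_nL L1_lam L1_mu *.
have L1_notmu : ~~ in_diag mu (L, 1).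
  by apply/negP => /and3P[_ _]; rewrite part_default //=; lia.
have L1_skew : in_skew lam mu (L, 1) by rewrite /in_skew L1_lam.
have L1_in : (L, 1) \in rcw_cells lam mu by rewrite mem_rcw_cells.
move: L1_mu; rewrite /Defs.mu_diag (negbTE L1_notmu) L1_skew tabQ_occ // prednK //=.
move=> le_occ.
have le_wt := leq_trans le_occ (andP (occ_bounds L1_in)).2.
have le_x := leq_letter_Qcnt i_gt0 (tab_range L1_skew) le_wt.
have := col1T (L - n); rewrite /ext_val subnKC ?(ltnW lt_nL) // (negbTE L1_notmu) L1_lam.
lia.
Qed.

Lemma count_strip_rows_letters i s : 1 <= i ->
  count (strip_row i) (iota 1 s) =
  count (fun y => has (fun c => (strip i c && (c.1 <= s)) && (tab T c == y)) (diag_cells lam))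
        (iota 1 (2 * n)).
Proof.
move=> i_gt0; rewrite -count_strip_rows // -count_strip_letters //.
apply: eq_in_count => c c_in /=.
case: (boolP (strip i c)) => //= c_strip; case: (c.1 <= s) => //=.
by move: c_strip; rewrite strip_occ // => /andP[/tab_range/andP[]].
Qed.

Lemma count_strip_rows_mono i s : 2 <= i ->
  count (strip_row i) (iota 1 s) <= count (strip_row i.-1) (iota 1 s).
Proof.
move=> i_gt1; have i_gt0 : 1 <= i by lia.
have i1_gt0 : 1 <= i.-1 by lia.
rewrite !count_strip_rows_letters //; apply: sub_count => y.
move=> /hasP[c c_in /andP[/andP[c_strip le_cs] /eqP c_y]].
move: (c_strip); rewrite strip_occ // => /andP[c_skew /eqP c_occ].
have c_rcw : c \in rcw_cells lam mu by rewrite mem_rcw_cells.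
have [|d d_skew [d_y d_occ]] := occ_exists y i.-1.
  by rewrite i1_gt0 -c_y (leq_trans _ (andP (occ_bounds c_rcw)).2) // c_occ leq_pred.
have d_in : d \in diag_cells lam by rewrite mem_diag_cells; case/andP: d_skew.
have le_dc : d.1 <= c.1.
  by apply: same_letter_row_leq; rewrite ?c_y ?d_y ?c_occ ?d_occ //; lia.
apply/hasP; exists d => //.
by rewrite strip_occ // d_skew d_occ d_y !eqxx (leq_trans le_dc le_cs).
Qed.

Lemma rvecE k : 1 <= k ->
  rvec lam mu Q k = [seq a <- iota 1 (ell k) | ~~ strip_row k a].
Proof. by case: k. Qed.

Lemma sorted_rvec k : sorted leq (rvec lam mu Q k).
Proof.
by case: k => [//|k]; rewrite rvecE // sorted_filter ?iota_sorted //; apply: leq_trans.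
Qed.

Lemma rvec_range k x : x \in rvec lam mu Q k -> 1 <= x <= ell k.
Proof. by case: k => [//|k]; rewrite rvecE // mem_filter mem_iota => /andP[_]; lia. Qed.

Lemma size_rvec k : 1 <= k -> size (rvec lam mu Q k) = ell k - l0 k.
Proof.
move=> k_gt0; rewrite rvecE // size_filter l0_strip_rows //.
by rewrite -{2}(size_iota 1 (ell k)) -(count_predC (strip_row k)) addKn.
Qed.

Lemma count_rvec_leq k y : 1 <= k ->
  count (fun x => x <= y) (rvec lam mu Q k) =
  minn y (ell k) - count (strip_row k) (iota 1 (minn y (ell k))).
Proof.
move=> k_gt0; rewrite rvecE // count_filter; set m := minn y (ell k).
rewrite -{1}(subnKC (geq_minr y (ell k))) -/m iotaD count_cat.
rewrite [X in _ + X](eq_in_count (a2 := pred0)) ?count_pred0 ?addn0; last first.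
  by move=> a; rewrite mem_iota /m /=; lia.
rewrite [LHS](eq_in_count (a2 := predC (strip_row k))); last first.
  by move=> a; rewrite mem_iota /m /=; lia.
by rewrite -{2}(size_iota 1 m) -(count_predC (strip_row k)) addKn.
Qed.

Lemma le_r_rvec i : 1 <= i -> le_r (rvec lam mu Q i) (rvec lam mu Q i.-1).
Proof.
case: i => [//|[_|i _]]; first by split.
apply: le_r_count; rewrite ?sorted_rvec // => y; rewrite !count_rvec_leq //=.
have le_ell : ell i.+2 <= ell i.+1 := ell_mu_leq_pred lam mu Q i.+2.
have := count_strip_rows_mono i.+2 (minn y (ell i.+1)) isT.
have : count (strip_row i.+2) (iota 1 (minn y (ell i.+2))) <= minn y (ell i.+2).
  by rewrite (leq_trans (count_size _ _)) ?size_iota.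
case: (leqP y (ell i.+2)) => [le_y|lt_y].
  by rewrite (minn_idPl (leq_trans le_y le_ell)) /=; lia.
rewrite (count_strip_rows_gap (t := minn y (ell i.+1))) //=; first lia.
by rewrite geq_min leq_min (ltnW lt_y) le_ell leqnn orbT.
Qed.

Lemma t0_size_rvec k : t0 lam mu Q k = (size (rvec lam mu Q k))%:Z%R.
Proof.
case: k => [//|k]; rewrite /t0 size_rvec //=.
by have := l0_leq_ell k.+1 isT; lia.
Qed.

End LRS.

Theorem proposition3 (n : nat) (lam mu : seq nat) (Q : filling) :
  is_partition lam -> size lam <= 2 * n ->
  is_partition mu -> size mu <= n ->
  subpart mu lam ->
  in_Rec n lam mu Q ->
  forall i, 1 <= i <= QN lam mu Q ->
  let ell := ell_mu lam mu Q in
  let Qi := Qcnt lam mu Q i in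
  (* (a) *)
  [/\ ((ell i.-1)%:Z = Qi%:Z + t0 lam mu Q i)%R
        /\ ((ell i)%:Z <= Qi%:Z + t0 lam mu Q i)%R,
  (* (b) *)
      [/\ (0 <= t0 lam mu Q i.-1)%R, (t0 lam mu Q i.-1 <= t0 lam mu Q i)%R,
          (t0 lam mu Q i <= (ell i)%:Z)%R & ell i <= ell i.-1],
  (* (c) *)
      ((2 * n)%:Z >= Qi%:Z + 2%:Z * t0 lam mu Q i)%R
        /\ (Qi%:Z + 2%:Z * t0 lam mu Q i = (ell i.-1)%:Z + t0 lam mu Q i)%R,
  (* (d) *)
      le_r (rvec lam mu Q i) (rvec lam mu Q i.-1)
  & (* (e) *)
      [/\ forall x, x \in rvec lam mu Q i -> 1 <= x <= ell i,
          forall x, 1 <= x <= ell i -> 1 <= x <= ell i.-1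
        & forall x, 1 <= x <= ell i.-1 ->
            (1 <= x%:Z <= (2 * n)%:Z - t0 lam mu Q i)%R]].
Proof.
move=> plam _ pmu le_mu _ [T [[ssT yamT wtT col1T] diamondQ]] i /andP[i_gt0 _] ell Qi.
have Qi_eq := Qcnt_eq plam pmu ssT yamT wtT diamondQ i i_gt0.
have le_l0 := l0_leq_ell plam pmu ssT yamT wtT diamondQ i i_gt0.
have le_ell := ell_mu_leq_pred lam mu Q i.
have le_2n := ell_pred_leq_Qcnt plam pmu ssT yamT wtT col1T diamondQ i le_mu i_gt0.
have le_rvec := le_r_rvec plam pmu ssT yamT wtT diamondQ i i_gt0.
have le_size := le_rvec.1.
have t0E k := t0_size_rvec plam pmu ssT yamT wtT diamondQ k.
have size_i := size_rvec plam pmu ssT yamT wtT diamondQ i i_gt0.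
rewrite /ell /Qi !t0E; split => //.
- by split; lia.
- by split; lia.
- by split; lia.
- split=> [x /rvec_range|x|x]; lia.
Qed.
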